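(* Let $G$ be a countable discrete group and let $\theta=(\{X_t\}_{t\in G},\{h_t\}_{t\in G})$ be a free topological partial action of $G$ on a $\sigma$-compact Hausdorff space $X$ such that every $X_t$ is $\sigma$-compact. Let $$R=\{(x,h_t(x)) : t\in G,\ x\in X_{t^{-1}}\}\subseteq X\times X,$$ equipped with the topology transported from the product topology of $X\times G$ ($G$ discrete) via the injective map $(x,h_t(x))\mapsto (x,t)$. Then $R$ is an equivalence relation on $X$, and with this topology it is an étale equivalence relation.
   Context: A topological partial action of $G$ on $X$ is a pair $(\{X_t\}_{t\in G},\{h_t\}_{t\in G})$ where each $X_t\subseteq X$ is open, each $h_t:X_{t^{-1}}\to X_t$ is a homeomorphism, and: (1) $X_e=X$ and $h_e=\mathrm{id}_X$; (2) $h_t(X_{t^{-1}}\cap X_s)=X_t\cap X_{ts}$ for all $s,t$; (3) $h_t(h_s(x))=h_{ts}(x)$ for $x\in X_{s^{-1}}\cap X_{s^{-1}t^{-1}}$. It is free if $h_t(x)=x$ for some $x\in X_{t^{-1}}$ implies $t=e$; freeness guarantees that for each $(x,y)\in R$ there is a unique $t$ with $y=h_t(x)$, so the map $(x,h_t(x))\mapsto(x,t)$ is injective. Thus a sequence $(x_n,h_{t_n}(x_n))$ converges to $(x,h_t(x))$ iff $x_n\to x$ in $X$ and $t_n=t$ eventually. An étale equivalence relation is an equivalence relation $R\subseteq X\times X$ with a topology such that $R$ is $\sigma$-compact, the diagonal $\{(x,x):x\in X\}$ is open in $R$, and every $(x,y)\in R$ has a neighbourhood $U$ in $R$ on which the range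 map $r(x,y)=x$ and the source map $s(x,y)=y$ restrict to homeomorphisms onto open subsets of $X$. *)

From HB Require Import structures.
From mathcomp Require Import all_boot all_order all_algebra.
From mathcomp Require Import all_classical all_reals.
From mathcomp Require Import topology.
Set Implicit Arguments. Unset Strict Implicit. Unset Printing Implicit Defensive.
Local Open Scope classical_set_scope.

Definition is_group (G : Type) (mul : G -> G -> G) (inv : G -> G) (e : G) : Prop :=
  [/\ associative mul, left_id e mul, right_id e mul,
      left_inverse e inv mul & right_inverse e inv mul].

Definition homeo_between (S T : topologicalType) (A : set S) (B : set T)
  (f : S -> T) : Prop :=
  [/\ f @` A = B,
      (forall x y, A x -> A y -> f x = f y -> x = y),
      {within A, continuous f} &
      exists g : T -> S,
        [/\ g @` B `<=` A, (forall y, B y -> f (g y) = y) &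
            {within B, continuous g}]].

Definition sigma_compact (T : topologicalType) (A : set T) : Prop :=
  exists K : nat -> set T, (forall n, compact (K n)) /\ \bigcup_n K n = A.

(** Topological partial action ({Xs t}, {h t}) of (G,mul,inv,e) on X.
    h t is a total function, only relevant on Xs (inv t). *)
Definition topological_partial_action (G : Type) (mul : G -> G -> G)
  (inv : G -> G) (e : G) (X : topologicalType) (Xs : G -> set X)
  (h : G -> X -> X) : Prop :=
  [/\ (forall t, open (Xs t)),
      (forall t, homeo_between (Xs (inv t)) (Xs t) (h t)),
      Xs e = setT /\ (forall x, h e x = x),
      (forall s t, h t @` (Xs (inv t) `&` Xs s) = Xs t `&` Xs (mul t s)) &
      (forall s t x, Xs (inv s) x -> Xs (mul (inv s) (inv t)) x ->
         h t (h s x) = h (mul t s) x)].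

Definition free_partial_action (G : Type) (inv : G -> G) (e : G)
  (X : Type) (Xs : G -> set X) (h : G -> X -> X) : Prop :=
  forall t x, Xs (inv t) x -> h t x = x -> t = e.

Definition orbit_rel (G : Type) (inv : G -> G) (X : Type) (Xs : G -> set X)
  (h : G -> X -> X) : set (X * X) :=
  [set p | exists t, Xs (inv t) p.1 /\ p.2 = h t p.1].

(** The map (x, h_t x) |-> (x, t) from R to X * G (G discrete);
    t is chosen (it is unique when the action is free). *)
Definition orbit_coord (G : choiceType) (inv : G -> G) (e : G)
  (X : topologicalType) (Xs : G -> set X) (h : G -> X -> X)
  (p : set_type (orbit_rel inv Xs h)) : X * discrete_topology G :=
  ((val p).1,
   xget e [set t | Xs (inv t) (val p).1 /\ (val p).2 = h t (val p).1]).

Definition orbit_space (G : choiceType) (inv : G -> G) (e : G)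
  (X : topologicalType) (Xs : G -> set X) (h : G -> X -> X) : topologicalType :=
  initial_topology (@orbit_coord G inv e X Xs h).

(** Etale equivalence relation: Rs is an equivalence relation on X and
    T is Rs equipped with a topology, T being identified with Rs via the
    bijection i : T -> Rs. *)
Definition etale_equivalence_relation (X : topologicalType) (Rs : set (X * X))
  (T : topologicalType) (i : T -> X * X) : Prop :=
  [/\ (forall p q, i p = i q -> p = q) /\ range i = Rs,
      [/\ (forall x, Rs (x, x)), (forall x y, Rs (x, y) -> Rs (y, x)) &
          (forall x y z, Rs (x, y) -> Rs (y, z) -> Rs (x, z))],
      sigma_compact [set: T],
      open [set p : T | (i p).1 = (i p).2] &
      forall p : T, exists U : set T, nbhs p U /\
        (open ((fst \o i) @` U) /\ homeo_between U ((fst \o i) @` U) (fst \o i)) /\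
        (open ((snd \o i) @` U) /\ homeo_between U ((snd \o i) @` U) (snd \o i))].

From HB Require Import structures.
From mathcomp Require Import all_boot all_order all_algebra.
From mathcomp Require Import all_classical all_reals.
From mathcomp Require Import topology.
Set Implicit Arguments. Unset Strict Implicit. Unset Printing Implicit Defensive.
Local Open Scope classical_set_scope.

(* The relation R is covered by the sheets R_t = {(x, h_t x) : x in X_{t^-1}},
   t in G.  Each sheet is open because the coordinate t is continuous on R (G is
   discrete), and freeness says that a point of R_t determines t.  On R_t the
   range map is a homeomorphism onto X_{t^-1} with inverse x |-> (x, h_t x),
   and the source map is its composite with the homeomorphism
   h_t : X_{t^-1} -> X_t.  The diagonal is the sheet R_e, and R is sigma-compact
   as a countable union of continuous images of the sigma-compact sets
   X_{t^-1}. *)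

Lemma sigma_compact_image (S T : topologicalType) (A : set S) (f : S -> T) :
  {within A, continuous f} -> sigma_compact A -> sigma_compact (f @` A).
Proof.
move=> fA [K [cK KA]]; exists (fun n => f @` K n); split.
  move=> n; apply: continuous_compact (cK n).
  by apply: continuous_subspaceW fA; rewrite -KA => x Kx; exists n.
by rewrite -KA image_bigcup.
Qed.

Lemma sigma_compact_bigcup (T : topologicalType) (I : countType)
  (A : I -> set T) :
  (forall i, sigma_compact (A i)) -> sigma_compact (\bigcup_i A i).
Proof.
move=> /choice[K cK].
exists (fun n => if unpickle n is Some (i, m) then K i m else set0); split.
  by move=> n; case: (unpickle n) => [[i m]|]; [exact: (cK i).1|exact: compact0].
apply/seteqP; split=> [x [n _]|x [i _]].
  case: (unpickle n) => [[i m] Kx|//].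
  by exists i => //; rewrite -(cK i).2; exists m.
by rewrite -(cK i).2 => -[m _ Kx]; exists (pickle (i, m)); rewrite ?pickleK.
Qed.

Lemma continuous_pair_cst (U V : topologicalType) (v : V) :
  continuous (fun u : U => (u, v)).
Proof. by move=> u; apply: cvg_pair; [exact: cvg_id|exact: cvg_cst]. Qed.

Lemma eq_homeo_between (S T : topologicalType) (A : set S) (B : set T)
  (f g : S -> T) :
  {in A, f =1 g} -> homeo_between A B f -> homeo_between A B g.
Proof.
move=> fg [fAB finj fc [k [kBA fk kc]]].
have fgA x : A x -> f x = g x by move=> Ax; apply: fg; rewrite inE.
split.
- by rewrite -fAB; apply/seteqP; split=> _ [x Ax <-]; exists x => //; rewrite fgA.
- by move=> x y Ax Ay; rewrite -!fgA //; exact: finj.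
- exact: subspace_eq_continuous fc.
exists k; split=> // y By; rewrite -fgA ?fk //.
by apply: kBA; exists y.
Qed.

Lemma homeo_between_comp (S T U : topologicalType) (A : set S) (B : set T)
  (C : set U) (f : S -> T) (k : T -> U) :
  open B -> homeo_between A B f -> homeo_between B C k ->
  homeo_between A C (k \o f).
Proof.
move=> oB [fAB finj fc [g [gBA fg gc]]] [kBC kinj kc [l [lCB kl lc]]].
have kcin : {in B, continuous k} by rewrite -continuous_open_subspace.
have gcin : {in B, continuous g} by rewrite -continuous_open_subspace.
split.
- by rewrite -image_comp fAB.
- move=> x y Ax Ay /kinj fxy; apply: finj => //; apply: fxy; rewrite -fAB.
  + by exists x.
  + by exists y.
- by apply: within_continuous_comp fc; rewrite fAB.
exists (g \o l); split.
- by rewrite -image_comp => _ [y /lCB By <-]; apply: gBA; exists y.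
- by move=> z Cz /=; rewrite fg ?kl //; apply: lCB; exists z.
- by apply: within_continuous_comp lc => y /set_mem/lCB/mem_set; exact: gcin.
Qed.

Lemma range_set_val (T : Type) (A : set T) : range (val : set_type A -> T) = A.
Proof.
apply/seteqP; split=> [_ [a _ <-]|x Ax]; first exact: set_valP.
by exists (SigSub (mem_set Ax)).
Qed.

Lemma initial_continuous_at (Y : choiceType) (S T : topologicalType)
  (w : Y -> T) (f : S -> initial_topology w) x :
  {for x, continuous (w \o f)} -> {for x, continuous f}.
Proof.
move=> wfx U [_ [[W oW <-]] /= Wwfx] /filterS; apply; apply: wfx.
exact: open_nbhs_nbhs.
Qed.

Section GroupAxioms.
Variables (G : Type) (mul : G -> G -> G) (inv : G -> G) (e : G).
Hypothesis grp : is_group mul inv e.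

Lemma group_mulVg t : mul (inv t) t = e.
Proof. by case: grp. Qed.

Lemma group_inv_uniq s t : mul s t = e -> t = inv s.
Proof.
case: grp => mulA mul1g mulg1 _ _ st1.
by rewrite -[t]mul1g -(group_mulVg s) -mulA st1 mulg1.
Qed.

Lemma group_invK t : inv (inv t) = t.
Proof. exact/esym/group_inv_uniq/group_mulVg. Qed.

Lemma group_inv1 : inv e = e.
Proof.
by apply/esym/group_inv_uniq; case: grp => _ _ mulg1 _ _; rewrite mulg1.
Qed.

Lemma group_invM s t : inv (mul s t) = mul (inv t) (inv s).
Proof.
apply/esym/group_inv_uniq; case: grp => mulA mul1g _ _ mulgV.
by rewrite -mulA [mul t (mul _ _)]mulA mulgV mul1g mulgV.
Qed.

Lemma group_eq_mulVg1 s t : mul (inv s) t = e -> t = s.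
Proof. by move=> /group_inv_uniq ->; rewrite group_invK. Qed.

End GroupAxioms.

Section PartialAction.
Variables (G : countType) (mul : G -> G -> G) (inv : G -> G) (e : G).
Variables (X : topologicalType) (Xs : G -> set X) (h : G -> X -> X).
Hypothesis grp : is_group mul inv e.
Hypothesis pa : topological_partial_action mul inv e Xs h.

Lemma open_domain t : open (Xs t).
Proof. by case: pa. Qed.

Lemma partial_homeo t : homeo_between (Xs (inv t)) (Xs t) (h t).
Proof. by case: pa. Qed.

Lemma domain1 : Xs e = setT.
Proof. by case: pa => _ _ []. Qed.

Lemma act1 x : h e x = x.
Proof. by case: pa => _ _ []. Qed.

Lemma act_mem t x : Xs (inv t) x -> Xs t (h t x).
Proof. by have [<- _ _ _] := partial_homeo t; exists x. Qed.

Lemma act_mul s t x : Xs (inv s) x -> Xs (mul (inv s) (inv t)) x ->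
  h t (h s x) = h (mul t s) x.
Proof. by case: pa => _ _ _ _; apply. Qed.

Lemma actK t x : Xs (inv t) x -> h (inv t) (h t x) = x.
Proof.
move=> xt; rewrite act_mul // ?(group_mulVg grp) ?act1 //.
by rewrite (group_invK grp) (group_mulVg grp) domain1.
Qed.

Lemma act_dom_mul s t x : Xs (inv s) x -> Xs (inv t) (h s x) ->
  Xs (mul (inv s) (inv t)) x.
Proof.
move=> xs hxt.
have : (Xs (inv s) `&` Xs (mul (inv s) (inv t))) (h (inv s) (h s x)).
  case: pa => _ _ _ <- _; exists (h s x) => //.
  by rewrite (group_invK grp); split=> //; exact: act_mem.
by rewrite actK // => -[].
Qed.

Lemma orbit_rel_refl x : orbit_rel inv Xs h (x, x).
Proof. by exists e; rewrite (group_inv1 grp) domain1 act1. Qed.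

Lemma orbit_rel_sym x y : orbit_rel inv Xs h (x, y) -> orbit_rel inv Xs h (y, x).
Proof.
case=> t /= [xt ->]; exists (inv t); rewrite /= (group_invK grp) actK //.
by split=> //; exact: act_mem.
Qed.

Lemma orbit_rel_trans x y z : orbit_rel inv Xs h (x, y) ->
  orbit_rel inv Xs h (y, z) -> orbit_rel inv Xs h (x, z).
Proof.
case=> s /= [xs ->] [t /= [yt ->]]; have xst := act_dom_mul xs yt.
by exists (mul t s); rewrite /= (group_invM grp) act_mul.
Qed.

Local Notation R := (orbit_rel inv Xs h).
Local Notation coord := (@orbit_coord G inv e X Xs h).
Local Notation space := (@orbit_space G inv e X Xs h).

Lemma orbit_coordP (q : set_type R) :
  Xs (inv (coord q).2) (val q).1 /\ (val q).2 = h (coord q).2 (val q).1.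
Proof. exact: (xgetPex e (set_valP q)). Qed.

Lemma continuous_orbit_coord_fst : continuous (fun q : space => (val q).1).
Proof.
move=> q; apply: (@continuous_comp space _ _ coord fst).
  exact: initial_continuous.
by case: (coord q) => ? ?; exact: cvg_fst.
Qed.

Lemma continuous_orbit_coord_snd : continuous (fun q : space => (coord q).2).
Proof.
move=> q; apply: (@continuous_comp space _ _ coord snd).
  exact: initial_continuous.
by case: (coord q) => ? ?; exact: cvg_snd.
Qed.

(* Off X_{t^-1} the value (y, y) is a junk point of R, never used. *)
Definition orbit_pair t y : X * X :=
  if pselect (Xs (inv t) y) is left _ then (y, h t y) else (y, y).

Lemma orbit_pair_rel t y : R (orbit_pair t y).
Proof.
by rewrite /orbit_pair; case: pselect => [yt|_]; [exists t|exact: orbit_rel_refl].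
Qed.

Definition orbit_lift t y : space := SigSub (mem_set (orbit_pair_rel t y)).

Lemma orbit_liftE t y : Xs (inv t) y -> val (orbit_lift t y) = (y, h t y).
Proof. by move=> yt; rewrite /= /orbit_pair; case: pselect. Qed.

Definition orbit_sheet t : set space := [set q | (coord q).2 = t].

Lemma open_orbit_sheet t : open (orbit_sheet t).
Proof.
apply: (@open_comp _ (discrete_topology G) (fun q : space => (coord q).2)
  [set t]).
  by move=> q _; exact: continuous_orbit_coord_snd.
exact: discrete_open.
Qed.

Hypothesis free : free_partial_action inv e Xs h.

Lemma act_index_uniq s t x : Xs (inv s) x -> Xs (inv t) x ->
  h s x = h t x -> s = t.
Proof.
move=> xs xt hst.
have hxt : Xs (inv (inv t)) (h s x).
  by rewrite (group_invK grp) hst; exact: act_mem.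
apply: (group_eq_mulVg1 grp); apply: (@free _ x).
  by rewrite (group_invM grp); exact: act_dom_mul.
by rewrite -act_mul ?hst ?actK //; exact: act_dom_mul.
Qed.

Lemma orbit_coordE (q : space) t :
  Xs (inv t) (val q).1 -> (val q).2 = h t (val q).1 -> (coord q).2 = t.
Proof.
have [xq ->] := orbit_coordP q => xt E.
by apply: act_index_uniq xq xt _; rewrite -E.
Qed.

Lemma orbit_coord_lift t y : Xs (inv t) y -> coord (orbit_lift t y) = (y, t).
Proof.
move=> yt; have E := orbit_liftE yt.
rewrite [LHS]surjective_pairing (orbit_coordE (t := t)) ?E //.
by change (((val (orbit_lift t y)).1, t) = (y, t)); rewrite E.
Qed.

Lemma continuous_orbit_lift t : {within Xs (inv t), continuous (orbit_lift t)}.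
Proof.
rewrite continuous_open_subspace; last exact: open_domain.
move=> y /set_mem yt; apply: initial_continuous_at.
rewrite /prop_for /continuous_at /= orbit_coord_lift //.
apply: cvg_trans (@continuous_pair_cst X (discrete_topology G) t y).
apply: near_eq_cvg; near=> z.
rewrite /= orbit_coord_lift //; near: z.
by apply: open_nbhs_nbhs; split; [exact: open_domain|].
Unshelve. all: end_near.
Qed.

Lemma orbit_sheetP t (q : space) :
  orbit_sheet t q <-> Xs (inv t) (val q).1 /\ (val q).2 = h t (val q).1.
Proof. by split=> [<-|[]]; [exact: orbit_coordP|exact: orbit_coordE]. Qed.

Lemma orbit_sheet_fst_homeo t :
  homeo_between (orbit_sheet t) (Xs (inv t)) (fst \o val).
Proof.
have lift_sheet y : Xs (inv t) y -> orbit_sheet t (orbit_lift t y).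
  by move=> yt; apply/orbit_sheetP; rewrite orbit_liftE.
have fst_lift y : Xs (inv t) y -> (fst \o val) (orbit_lift t y) = y.
  by move=> yt; rewrite /comp orbit_liftE.
split.
- apply/seteqP; split=> [_ [q /orbit_sheetP[xq _] <-] //|y yt].
  by exists (orbit_lift t y); [exact: lift_sheet|exact: fst_lift].
- move=> q1 q2 /orbit_sheetP[_ E1] /orbit_sheetP[_ E2] /= E; apply: val_inj.
  by rewrite [val q1]surjective_pairing [val q2]surjective_pairing E1 E2 E.
- exact/continuous_subspaceT/continuous_orbit_coord_fst.
exists (orbit_lift t); split=> [_ [y yt <-]|//|].
  exact: lift_sheet.
exact: continuous_orbit_lift.
Qed.

Lemma orbit_sheet_snd_homeo t : homeo_between (orbit_sheet t) (Xs t) (snd \o val).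
Proof.
have sheet_comp := homeo_between_comp (open_domain _) (orbit_sheet_fst_homeo t)
  (partial_homeo t).
apply: eq_homeo_between sheet_comp.
by move=> q /set_mem/orbit_sheetP[_ E]; rewrite /comp E.
Qed.

Lemma orbit_diagonalE :
  [set q : space | (val q).1 = (val q).2] = orbit_sheet e.
Proof.
apply/seteqP; split=> q.
  move=> /= E; apply: orbit_coordE; last by rewrite act1.
  by rewrite (group_inv1 grp) domain1.
by move=> /orbit_sheetP[_ E]; change ((val q).1 = (val q).2); rewrite E act1.
Qed.

Lemma orbit_space_sigma_compact :
  (forall t, sigma_compact (Xs t)) -> sigma_compact [set: space].
Proof.
move=> sXs; have -> : [set: space] = \bigcup_t orbit_lift t @` Xs (inv t).
  apply/seteqP; split=> // q _; have [xq Eq] := orbit_coordP q.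
  exists (coord q).2 => //; exists (val q).1 => //; apply: val_inj.
  by rewrite orbit_liftE // [RHS]surjective_pairing Eq.
apply: sigma_compact_bigcup => t; apply: sigma_compact_image (sXs _).
exact: continuous_orbit_lift.
Qed.

End PartialAction.

Theorem mainTheorem1 (G : countType) (mul : G -> G -> G) (inv : G -> G) (e : G)
  (X : topologicalType) (Xs : G -> set X) (h : G -> X -> X) :
  is_group mul inv e ->
  topological_partial_action mul inv e Xs h ->
  free_partial_action inv e Xs h ->
  hausdorff_space X ->
  sigma_compact [set: X] ->
  (forall t, sigma_compact (Xs t)) ->
  etale_equivalence_relation (orbit_rel inv Xs h)
    (fun p : @orbit_space G inv e X Xs h => val (p : set_type (orbit_rel inv Xs h))).
Proof.
move=> grp pa free _ _ sXs; split.
- by split; [exact: val_inj|exact: range_set_val].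
- split; [exact: orbit_rel_refl grp pa|exact: orbit_rel_sym grp pa|].
  exact: orbit_rel_trans grp pa.
- exact: orbit_space_sigma_compact grp pa free sXs.
- by rewrite (orbit_diagonalE grp pa free); exact: open_orbit_sheet.
move=> p; exists (orbit_sheet (orbit_coord e p).2); split.
  by apply: open_nbhs_nbhs; split; [exact: open_orbit_sheet|].
have fst_hom := orbit_sheet_fst_homeo grp pa free (orbit_coord e p).2.
have snd_hom := orbit_sheet_snd_homeo grp pa free (orbit_coord e p).2.
have [fst_im _ _ _] := fst_hom; have [snd_im _ _ _] := snd_hom.
by rewrite fst_im snd_im; split; split=> //; exact: open_domain pa _.
Qed.
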